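(* For an integer sequence $(S_n)_{n\ge0}$, integers $k\ge1$ and $n\ge0$, set $\sigma_S(k,n) = \sum_{i=1}^{k} S_{n+i}$. Then for all $k \geq 1$ and $n \geq 0$: (1) $\sigma_P(k,n) = \tfrac12(Q_{n+k+1}-Q_{n+1})$, and this equals $2P_{k/2}P_{k/2+n+1}$ if $k\equiv 0 \pmod 4$ and $Q_{k/2}Q_{k/2+n+1}$ if $k \equiv 2 \pmod 4$; (2) $\sigma_Q(k,n) = P_{n+k+1}-P_{n+1}$, and this equals $2P_{k/2}Q_{k/2+n+1}$ if $k\equiv 0 \pmod 4$ and $2Q_{k/2}P_{k/2+n+1}$ if $k \equiv 2 \pmod 4$; (3) $\sigma_B(k,n) = \tfrac14(P_{2k+2n+1}-P_{2n+1})$, and this equals $\tfrac12 P_k Q_{k+2n+1}$ if $k$ is even and $\tfrac12 Q_k P_{k+2n+1}$ if $k$ is odd; (4) $\sigma_C(k,n) = \tfrac12(Q_{2k+2n+1}-Q_{2n+1})$, and this equals $2P_kP_{k+2n+1}$ if $k$ is even and $Q_kQ_{k+2n+1}$ if $k$ is odd; (5) $\sigma_c(k,n) = \tfrac12(Q_{2k+2n}-Q_{2n})$, and this equals $2P_kP_{k+2n}$ if $k$ is even and $Q_kQ_{k+2n}$ if $k$ is odd.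
   Context: The Pell sequence $(P_n)_{n\ge0}$: $P_0=0$, $P_1=1$, $P_n = 2P_{n-1}+P_{n-2}$. The associated Pell sequence $(Q_n)_{n\ge0}$: $Q_0=1$, $Q_1=1$, $Q_n=2Q_{n-1}+Q_{n-2}$. The balancing sequence $(B_n)_{n\ge0}$: $B_0=0$, $B_1=1$, $B_n=6B_{n-1}-B_{n-2}$. The Lucas-balancing sequence $(C_n)_{n\ge0}$: $C_0=1$, $C_1=3$, $C_n=6C_{n-1}-C_{n-2}$. The Lucas-cobalancing sequence $(c_n)_{n\ge0}$: $c_0=-1$, $c_1=1$, $c_n=6c_{n-1}-c_{n-2}$. *)

(* sequences are int-valued (c_0 = -1); fractions are
   evaluated in rat. *)
From mathcomp Require Import all_boot all_order all_algebra.
Set Implicit Arguments. Unset Strict Implicit. Unset Printing Implicit Defensive.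
Import Order.TTheory GRing.Theory Num.Theory.
Local Open Scope ring_scope.

Fixpoint Pell (n : nat) : int :=
  match n with
  | 0 => 0
  | 1 => 1
  | (m.+1 as k).+1 => 2 * Pell k + Pell m
  end.

Fixpoint QPell (n : nat) : int :=
  match n with
  | 0 => 1
  | 1 => 1
  | (m.+1 as k).+1 => 2 * QPell k + QPell m
  end.

Fixpoint Bal (n : nat) : int :=
  match n with
  | 0 => 0
  | 1 => 1
  | (m.+1 as k).+1 => 6 * Bal k - Bal m
  end.

Fixpoint LBal (n : nat) : int :=
  match n with
  | 0 => 1
  | 1 => 3
  | (m.+1 as k).+1 => 6 * LBal k - LBal m
  end.

Fixpoint LCob (n : nat) : int :=
  match n with
  | 0 => -1
  | 1 => 1
  | (m.+1 as k).+1 => 6 * LCob k - LCob m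
  end.

Definition sigma (S : nat -> int) (k n : nat) : int :=
  \sum_(1 <= i < k.+1) S (n + i)%N.

Definition toQ (z : int) : rat := z%:~R.

(* Each sum telescopes: 2 P_j = Q_(j+1) - Q_j and Q_j = P_(j+1) - P_j, while
   bisecting a sequence with x_(j+2) = 2 x_(j+1) + x_j yields one with
   x_(j+2) = 6 x_(j+1) - x_j, so that 2 B_j = P_(2j), C_j = Q_(2j) and
   c_(j+1) = Q_(2j+1).  The resulting differences Q_(a+2b) - Q_a and
   P_(a+2b) - P_a factor through the addition formulas
   P_(m+n) = P_m Q_n + Q_m P_n, Q_(m+n) = Q_m Q_n + 2 P_m P_n and the identity
   Q_b^2 - 2 P_b^2 = (-1)^b, whose sign decides which product appears. *)

From mathcomp Require Import all_boot all_order all_algebra.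
From mathcomp Require Import zify ring.
Import GRing.Theory Num.Theory.
Local Open Scope ring_scope.

Definition lin_rec {R : pzRingType} (a b : R) (x : nat -> R) : Prop :=
  forall j, x j.+2 = a * x j.+1 + b * x j.

Lemma lin_rec_eq {R : pzRingType} {a b : R} {u v : nat -> R} :
  lin_rec a b u -> lin_rec a b v -> u 0%N = v 0%N -> u 1%N = v 1%N -> u =1 v.
Proof.
move=> hu hv e0 e1 j; suff [] : u j = v j /\ u j.+1 = v j.+1 by [].
by elim: j => [|j [ej ej1]] //; rewrite hu hv ej ej1.
Qed.

Lemma lin_rec_succ {R : pzRingType} {a b : R} {x : nat -> R} :
  lin_rec a b x -> lin_rec a b (fun j => x j.+1).
Proof. by move=> hx j; apply: hx. Qed.

Lemma lin_recMr {R : pzRingType} {a b : R} (c : R) {x : nat -> R} :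
  lin_rec a b x -> lin_rec a b (fun j => x j * c).
Proof. by move=> hx j; rewrite hx mulrDl !mulrA. Qed.

Lemma double_succ j : (2 * j.+1 = (2 * j).+2)%N.
Proof. by rewrite mulnS. Qed.

Lemma lin_rec_bisect {R : comPzRingType} {x : nat -> R} :
  lin_rec 2 1 x -> lin_rec 6 (-1) (fun j => x (2 * j)%N).
Proof. by move=> hx j; rewrite !double_succ !hx; ring. Qed.

Lemma Pell_rec : lin_rec 2 1 Pell.
Proof. by move=> j; rewrite mul1r. Qed.

Lemma QPell_rec : lin_rec 2 1 QPell.
Proof. by move=> j; rewrite mul1r. Qed.

Lemma Bal_rec : lin_rec 6 (-1) Bal.
Proof. by move=> j; rewrite mulN1r. Qed.

Lemma LBal_rec : lin_rec 6 (-1) LBal.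
Proof. by move=> j; rewrite mulN1r. Qed.

Lemma LCob_rec : lin_rec 6 (-1) LCob.
Proof. by move=> j; rewrite mulN1r. Qed.

Lemma Pell_QPell_succ n :
  Pell n.+1 = Pell n + QPell n /\ QPell n.+1 = QPell n + 2 * Pell n.
Proof.
elim: n => [|n [eP eQ]] //.
by rewrite Pell_rec QPell_rec eP eQ; split; ring.
Qed.

Lemma Pell_succ n : Pell n.+1 = Pell n + QPell n.
Proof. by case: (Pell_QPell_succ n). Qed.

Lemma QPell_succ n : QPell n.+1 = QPell n + 2 * Pell n.
Proof. by case: (Pell_QPell_succ n). Qed.

Lemma Pell_QPell_addn m n :
  Pell (m + n) = Pell m * QPell n + QPell m * Pell n /\
  QPell (m + n) = QPell m * QPell n + 2 * Pell m * Pell n.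
Proof.
elim: m => [|m [eP eQ]]; first by split; ring.
have [eP1 eQ1] := Pell_QPell_succ m; have [eP2 eQ2] := Pell_QPell_succ (m + n).
by rewrite addSn eP2 eQ2 eP eQ eP1 eQ1; split; ring.
Qed.

Lemma Pell_norm n : QPell n ^+ 2 - 2 * Pell n ^+ 2 = (-1) ^+ n.
Proof.
elim: n => [|n IH] //; have [eP eQ] := Pell_QPell_succ n.
by rewrite (exprS (-1)) -IH eP eQ; ring.
Qed.

Lemma Bal_Pell n : Bal n * 2 = Pell (2 * n).
Proof.
exact: (lin_rec_eq (lin_recMr 2 Bal_rec) (lin_rec_bisect Pell_rec)).
Qed.

Lemma LBal_QPell n : LBal n = QPell (2 * n).
Proof.
exact: (lin_rec_eq LBal_rec (lin_rec_bisect QPell_rec)).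
Qed.

Lemma LCob_QPell n : LCob n.+1 = QPell (2 * n).+1.
Proof.
exact: (lin_rec_eq (lin_rec_succ LCob_rec) (lin_rec_bisect (lin_rec_succ QPell_rec))).
Qed.

Lemma sigma_telescope {S T : nat -> int} {c : int} (k n : nat) :
  (forall j, S j.+1 * c = T j.+1 - T j) -> sigma S k n * c = T (n + k)%N - T n.
Proof.
move=> ST; rewrite /sigma mulr_suml big_add1 /=.
rewrite (@telescope_sumr_eq _ 0 k (fun i => T (n + i)%N)) ?addn0 // => j _.
by rewrite addnS ST.
Qed.

Lemma sigma_Pell k n : sigma Pell k n * 2 = QPell (n + k + 1) - QPell (n + 1).
Proof.
rewrite !addn1; apply: (sigma_telescope (T := fun j => QPell j.+1)) => j.
by rewrite (QPell_succ j.+1); ring.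
Qed.

Lemma sigma_QPell k n : sigma QPell k n = Pell (n + k + 1) - Pell (n + 1).
Proof.
rewrite !addn1 -[LHS]mulr1; apply: (sigma_telescope (T := fun j => Pell j.+1)) => j.
by rewrite (Pell_succ j.+1); ring.
Qed.

Lemma sigma_Bal k n : sigma Bal k n * 4 = Pell (2 * k + 2 * n + 1) - Pell (2 * n + 1).
Proof.
rewrite !addn1 (addnC (2 * k)) -mulnDr.
apply: (sigma_telescope (T := fun j => Pell (2 * j).+1)) => j.
have -> : Bal j.+1 * 4 = Bal j.+1 * 2 * 2 by ring.
by rewrite Bal_Pell double_succ (Pell_rec (2 * j).+1); ring.
Qed.

Lemma sigma_LBal k n :
  sigma LBal k n * 2 = QPell (2 * k + 2 * n + 1) - QPell (2 * n + 1).
Proof.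
rewrite !addn1 (addnC (2 * k)) -mulnDr.
apply: (sigma_telescope (T := fun j => QPell (2 * j).+1)) => j.
by rewrite LBal_QPell double_succ (QPell_rec (2 * j).+1); ring.
Qed.

Lemma sigma_LCob k n : sigma LCob k n * 2 = QPell (2 * k + 2 * n) - QPell (2 * n).
Proof.
rewrite (addnC (2 * k)) -mulnDr.
apply: (sigma_telescope (T := fun j => QPell (2 * j))) => j.
by rewrite LCob_QPell double_succ (QPell_rec (2 * j)); ring.
Qed.

Lemma Pell_QPell_addn_double a b :
  [/\ QPell (a + 2 * b) - (-1) ^+ b * QPell a = 4 * Pell b * Pell (a + b),
      QPell (a + 2 * b) + (-1) ^+ b * QPell a = 2 * QPell b * QPell (a + b),
      Pell (a + 2 * b) - (-1) ^+ b * Pell a = 2 * Pell b * QPell (a + b) &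
      Pell (a + 2 * b) + (-1) ^+ b * Pell a = 2 * QPell b * Pell (a + b)].
Proof.
rewrite -Pell_norm mul2n -addnn addnA.
have [eP eQ] := Pell_QPell_addn (a + b) b; have [eP' eQ'] := Pell_QPell_addn a b.
by rewrite eP eQ eP' eQ'; split; ring.
Qed.

Lemma QPell_addn_double_sub a b :
  QPell (a + 2 * b) - QPell a =
  if odd b then 2 * QPell b * QPell (a + b) else 4 * Pell b * Pell (a + b).
Proof.
have [<- <- _ _] := Pell_QPell_addn_double a b.
by rewrite -signr_odd; case: (odd b) => /=; ring.
Qed.

Lemma Pell_addn_double_sub a b :
  Pell (a + 2 * b) - Pell a =
  if odd b then 2 * QPell b * Pell (a + b) else 2 * Pell b * QPell (a + b).
Proof.
have [_ _ <- <-] := Pell_QPell_addn_double a b.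
by rewrite -signr_odd; case: (odd b) => /=; ring.
Qed.

Lemma sigma_Pell_double m n :
  sigma Pell (2 * m) n =
  if odd m then QPell m * QPell (m + n + 1) else 2 * Pell m * Pell (m + n + 1).
Proof.
apply: (@mulIf _ 2) => //; rewrite sigma_Pell.
rewrite (addnAC n (2 * m)) (addnC m n) (addnAC n m) QPell_addn_double_sub.
by case: (odd m); ring.
Qed.

Lemma sigma_QPell_double m n :
  sigma QPell (2 * m) n =
  if odd m then 2 * QPell m * Pell (m + n + 1) else 2 * Pell m * QPell (m + n + 1).
Proof.
by rewrite sigma_QPell (addnAC n (2 * m)) (addnC m n) (addnAC n m) Pell_addn_double_sub.
Qed.

Lemma sigma_Bal_prod k n :
  sigma Bal k n * 2 =
  if odd k then QPell k * Pell (k + 2 * n + 1) else Pell k * QPell (k + 2 * n + 1).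
Proof.
apply: (@mulIf _ 2) => //; rewrite -mulrA -natrM sigma_Bal.
rewrite -(addnA (2 * k)) (addnC (2 * k)) -(addnA k) (addnC k) Pell_addn_double_sub.
by case: (odd k); ring.
Qed.

Lemma sigma_LBal_prod k n :
  sigma LBal k n =
  if odd k then QPell k * QPell (k + 2 * n + 1) else 2 * Pell k * Pell (k + 2 * n + 1).
Proof.
apply: (@mulIf _ 2) => //; rewrite sigma_LBal.
rewrite -(addnA (2 * k)) (addnC (2 * k)) -(addnA k) (addnC k) QPell_addn_double_sub.
by case: (odd k); ring.
Qed.

Lemma sigma_LCob_prod k n :
  sigma LCob k n =
  if odd k then QPell k * QPell (k + 2 * n) else 2 * Pell k * Pell (k + 2 * n).
Proof.
apply: (@mulIf _ 2) => //; rewrite sigma_LCob (addnC (2 * k)) (addnC k) QPell_addn_double_sub.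
by case: (odd k); ring.
Qed.

Lemma modn4_0 k : (k %% 4 = 0)%N -> exists2 m, k = (2 * m)%N & odd m = false.
Proof.
move=> k4; exists (k %/ 2)%N; first lia.
have : ((k %/ 2) %% 2 = 0)%N by lia.
by rewrite modn2; case: odd.
Qed.

Lemma modn4_2 k : (k %% 4 = 2)%N -> exists2 m, k = (2 * m)%N & odd m.
Proof.
move=> k4; exists (k %/ 2)%N; first lia.
have : ((k %/ 2) %% 2 = 1)%N by lia.
by rewrite modn2; case: odd.
Qed.

Lemma toQ_div {x y : int} {d : nat} :
  (0 < d)%N -> x * d%:R = y -> toQ x = toQ y / d%:R.
Proof. by move=> d0 <-; rewrite /toQ intrM rmorph_nat mulfK // pnatr_eq0 -lt0n. Qed.

Theorem theorem14 (k n : nat) (hk : (1 <= k)%N) :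
  (* (1) *)
  [/\ toQ (sigma Pell k n) = (toQ (QPell (n + k + 1)) - toQ (QPell (n + 1))) / 2,
      (k %% 4 = 0)%N ->
        sigma Pell k n = 2 * Pell (k %/ 2) * Pell (k %/ 2 + n + 1) &
      (k %% 4 = 2)%N ->
        sigma Pell k n = QPell (k %/ 2) * QPell (k %/ 2 + n + 1)] /\
  (* (2) *)
  [/\ sigma QPell k n = Pell (n + k + 1) - Pell (n + 1),
      (k %% 4 = 0)%N ->
        sigma QPell k n = 2 * Pell (k %/ 2) * QPell (k %/ 2 + n + 1) &
      (k %% 4 = 2)%N ->
        sigma QPell k n = 2 * QPell (k %/ 2) * Pell (k %/ 2 + n + 1)] /\
  (* (3) *)
  [/\ toQ (sigma Bal k n) = (toQ (Pell (2 * k + 2 * n + 1)) - toQ (Pell (2 * n + 1))) / 4,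
      ~~ odd k ->
        toQ (sigma Bal k n) = toQ (Pell k) * toQ (QPell (k + 2 * n + 1)) / 2 &
      odd k ->
        toQ (sigma Bal k n) = toQ (QPell k) * toQ (Pell (k + 2 * n + 1)) / 2] /\
  (* (4) *)
  [/\ toQ (sigma LBal k n) = (toQ (QPell (2 * k + 2 * n + 1)) - toQ (QPell (2 * n + 1))) / 2,
      ~~ odd k ->
        sigma LBal k n = 2 * Pell k * Pell (k + 2 * n + 1) &
      odd k ->
        sigma LBal k n = QPell k * QPell (k + 2 * n + 1)] /\
  (* (5) *)
  [/\ toQ (sigma LCob k n) = (toQ (QPell (2 * k + 2 * n)) - toQ (QPell (2 * n))) / 2,
      ~~ odd k ->
        sigma LCob k n = 2 * Pell k * Pell (k + 2 * n) &
      odd k ->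
        sigma LCob k n = QPell k * QPell (k + 2 * n)].
Proof.
split; [|split; [|split; [|split]]]; split.
- by rewrite (toQ_div _ (sigma_Pell k n)) // /toQ intrB.
- by case/modn4_0 => m -> hm; rewrite mulKn // sigma_Pell_double hm.
- by case/modn4_2 => m -> hm; rewrite mulKn // sigma_Pell_double hm.
- exact: sigma_QPell.
- by case/modn4_0 => m -> hm; rewrite mulKn // sigma_QPell_double hm.
- by case/modn4_2 => m -> hm; rewrite mulKn // sigma_QPell_double hm.
- by rewrite (toQ_div _ (sigma_Bal k n)) // /toQ intrB.
- by move=> /negbTE hk'; rewrite (toQ_div _ (sigma_Bal_prod k n)) // hk' /toQ intrM.
- by move=> hk'; rewrite (toQ_div _ (sigma_Bal_prod k n)) // hk' /toQ intrM.
- by rewrite (toQ_div _ (sigma_LBal k n)) // /toQ intrB.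
- by move=> /negbTE hk'; rewrite sigma_LBal_prod hk'.
- by move=> hk'; rewrite sigma_LBal_prod hk'.
- by rewrite (toQ_div _ (sigma_LCob k n)) // /toQ intrB.
- by move=> /negbTE hk'; rewrite sigma_LCob_prod hk'.
- by move=> hk'; rewrite sigma_LCob_prod hk'.
Qed.
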